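(* Let $H$ be a Hessenberg space of $n\times n$ matrices that is minimal in its $E_{1n}$-equivalence class, and let $H=\sum_{(i,j)\in S}H_{ij}$ be a maximal decomposition. Then the irreducible components of $X_H$ are exactly the Schubert varieties $X_{H_{ij}}$, $(i,j)\in S$.
   Context: $B$ is the group of invertible upper-triangular $n\times n$ complex matrices; $[g]$ denotes the flag whose $k$-dimensional subspace is spanned by the first $k$ columns of $g$. $E_{kl}$ is the matrix unit with $1$ in entry $(k,l)$. A Hessenberg space is a subspace of the form $H_h=\operatorname{span}\{E_{kl}: k\le h(l)\}$ for a nondecreasing function $h:\{1,\dots,n\}\to\{0,1,\dots,n\}$. For $1\le i,j\le n$, $H_{ij}=\operatorname{span}\{E_{kl}: k\le i,\ l\ge j\}$. For a Hessenberg space $K$, $X_K=\{[g]\in GL_n(\mathbb{C})/B: g^{-1}E_{1n}g\in K\}$. Two Hessenberg spaces $K,K'$ are $E_{1n}$-equivalent if $X_K=X_{K'}$; $K$ is minimal in its class if no Hessenberg space properly contained in $K$ is $E_{1n}$-equivalent to it. A maximal decomposition of $H$ is an expression $H=\sum_{(i,j)\in S}H_{ij}$ (sum of subspaces) over a set $S$ of pairs such that no two distinct pairs $(i,j),(i',j')\in S$ satisfy $H_{ij}\subseteq H_{i'j'}$. (For $i\ne j$, $X_{H_{ij}}$ is a Schubert variety, i.e. the closure of a set $\{[bw]:b\in B\}$ for a permutation matrix $w$.) *)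

From HB Require Import structures.
From mathcomp Require Import all_boot all_order all_algebra.
From mathcomp Require Import Rstruct complex.
Set Implicit Arguments.
Unset Strict Implicit.
Unset Printing Implicit Defensive.
Import Order.TTheory GRing.Theory Num.Theory.
Local Open Scope ring_scope.

Definition Cx : Type := (Rdefinitions.R)[i].

Inductive polyfun (m : nat) : ('M[Cx]_m -> Cx) -> Prop :=
| pf_const (c : Cx) : polyfun (fun _ => c)
| pf_coord (i j : 'I_m) : polyfun (fun A => A i j)
| pf_add f g : polyfun f -> polyfun g -> polyfun (fun A => f A + g A)
| pf_mul f g : polyfun f -> polyfun g -> polyfun (fun A => f A * g A).

(* Subsets of GL_m(C) (and of GL_m(C)/B) are represented by predicates on
   matrices; only their values on invertible matrices matter. *)
Definition Bmat (m : nat) (b : 'M[Cx]_m) : Prop :=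
  b \in unitmx /\ forall i j : 'I_m, (j < i)%N -> b i j = 0.

Definition zclosed (m : nat) (Z : 'M[Cx]_m -> Prop) : Prop :=
  exists P : ('M[Cx]_m -> Cx) -> Prop,
    (forall f, P f -> polyfun f) /\
    forall g, g \in unitmx -> (Z g <-> forall f, P f -> f g = 0).

(* Right B-invariance: Y descends to a subset of the flag variety G/B. *)
Definition binv (m : nat) (Y : 'M[Cx]_m -> Prop) : Prop :=
  forall g b, g \in unitmx -> Bmat b -> (Y (g *m b) <-> Y g).

Definition fl_sub (m : nat) (Y Z : 'M[Cx]_m -> Prop) : Prop :=
  forall g, g \in unitmx -> Y g -> Z g.
Definition fl_eq (m : nat) (Y Z : 'M[Cx]_m -> Prop) : Prop :=
  fl_sub Y Z /\ fl_sub Z Y.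

(* Closed subsets of G/B: quotient topology of the Zariski topology of G
   (which is the Zariski topology of the flag variety). *)
Definition fl_closed (m : nat) (F : 'M[Cx]_m -> Prop) : Prop :=
  binv F /\ zclosed F.

Definition fl_irreducible (m : nat) (Y : 'M[Cx]_m -> Prop) : Prop :=
  (exists g, g \in unitmx /\ Y g) /\
  forall F1 F2, fl_closed F1 -> fl_closed F2 ->
    fl_sub Y (fun g => F1 g \/ F2 g) -> fl_sub Y F1 \/ fl_sub Y F2.

Definition fl_irr_component (m : nat) (X Y : 'M[Cx]_m -> Prop) : Prop :=
  [/\ binv Y, fl_sub Y X, fl_irreducible Y &
      forall Z, binv Z -> fl_sub Y Z -> fl_sub Z X -> fl_irreducible Z ->
        fl_sub Z Y].

(* Hessenberg spaces.  Indices are 0-based: row k, column l of 'I_m stand for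
   k+1, l+1; the condition k+1 <= h(l+1) becomes k < h l. *)
Definition is_hess (m : nat) (K : 'M[Cx]_m -> Prop) : Prop :=
  exists h : 'I_m -> nat,
    [/\ forall l l' : 'I_m, (l <= l')%N -> (h l <= h l')%N,
        forall l, (h l <= m)%N &
        forall A, K A <-> forall k l : 'I_m, (h l <= k)%N -> A k l = 0].

Definition Hij (m : nat) (s : 'I_m * 'I_m) (A : 'M[Cx]_m) : Prop :=
  forall k l : 'I_m, (s.1 < k)%N \/ (l < s.2)%N -> A k l = 0.

Definition Hsum (m : nat) (S : {set 'I_m * 'I_m}) (A : 'M[Cx]_m) : Prop :=
  exists F : 'I_m * 'I_m -> 'M[Cx]_m,
    (forall s, s \in S -> Hij s (F s)) /\ A = \sum_(s in S) F s.

Definition max_decomposition (m : nat) (H : 'M[Cx]_m -> Prop)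
    (S : {set 'I_m * 'I_m}) : Prop :=
  (forall A, H A <-> Hsum S A) /\
  forall s t, s \in S -> t \in S -> s != t ->
    ~ (forall A, Hij s A -> Hij t A).

(* E_{1n} for n = m.+1 *)
Definition E1n (n : nat) : 'M[Cx]_n.+1 := delta_mx ord0 ord_max.

Definition XK (n : nat) (K : 'M[Cx]_n.+1 -> Prop) : 'M[Cx]_n.+1 -> Prop :=
  fun g => K (invmx g *m E1n n *m g).

Definition proper_sub (m : nat) (K H : 'M[Cx]_m -> Prop) : Prop :=
  (forall A, K A -> H A) /\ exists A, H A /\ ~ K A.

Definition minimal_hess (n : nat) (H : 'M[Cx]_n.+1 -> Prop) : Prop :=
  is_hess H /\
  forall K, is_hess K -> proper_sub K H -> ~ fl_eq (XK K) (XK H).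

From HB Require Import structures.
From mathcomp Require Import all_boot all_order all_algebra.
From mathcomp Require Import Rstruct complex.
From Stdlib Require Import Classical FunctionalExtensionality.

Set Implicit Arguments.
Unset Strict Implicit.
Unset Printing Implicit Defensive.
Import Order.TTheory GRing.Theory Num.Theory.
Local Open Scope ring_scope.

(* For invertible g, g^-1 E_1n g is the rank-one matrix v w^T, with v the first column of g^-1
   and w the last row of g.  Hence g lies in X_{H_ij} iff v vanishes below i and w vanishes left
   of j, and X_H is the finite union of the closed sets X_{H_ij}, (i,j) in S; every irreducible
   subset of X_H thus lies in one of them.
   For i <> j, X_{H_ij} contains the affine set of matrices whose column i is a multiple of the
   first basis vector and whose last row vanishes left of j.  Its B-translates are the points of
   X_{H_ij} with v_i <> 0, and every point of X_{H_ij} is a limit of such points along lines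
   g (1 - t y e_m^T), so X_{H_ij} is irreducible.
   Minimality of H is used at the corners: if the entry v_i w_j of g^-1 E_1n g vanished on
   X_{H_ij}, it would vanish on all of X_H (it vanishes on the other boxes of S), and deleting
   E_ij from H would not change X_H.  A point of X_{H_ij} with v_i w_j <> 0 lies in no other
   X_{H_st}, and for i = j it contradicts w v = 0 when n > 1. *)

Lemma exists_nonroot (R : numDomainType) (p : {poly R}) :
  p != 0 -> exists2 t, t != 0 & ~~ root p t.
Proof.
move=> p_neq0; apply: NNPP => no_nonroot.
pose rs := [seq k.+1%:R : R | k <- iota 0 (size p)].
suff : (size rs < size p)%N by rewrite size_map size_iota ltnn.
apply: max_poly_roots p_neq0 _ _.
- apply/allP => _ /mapP [k _ ->]; apply: contraT => not_root.
  by case: no_nonroot; exists k.+1%:R; rewrite ?pnatr_eq0.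
- by rewrite map_inj_uniq ?iota_uniq // => a b /eqP; rewrite eqr_nat => /eqP [].
Qed.

Section PolyFun.
Variable m : nat.
Implicit Types (f g : 'M[Cx]_m -> Cx) (A B : 'M[Cx]_m).

Lemma polyfun_ext f g : (forall A, f A = g A) -> polyfun f -> polyfun g.
Proof. by move=> /functional_extensionality ->. Qed.

Lemma polyfun_sum (I : Type) (r : seq I) (P : pred I) (F : I -> 'M[Cx]_m -> Cx) :
  (forall i, polyfun (F i)) -> polyfun (fun A => \sum_(i <- r | P i) F i A).
Proof.
move=> pfF; elim: r => [|x r IHr].
  by apply: polyfun_ext (pf_const _ 0) => A; rewrite big_nil.
have [Px|nPx] := boolP (P x).
  by apply: polyfun_ext (pf_add (pfF x) IHr) => A; rewrite big_cons Px.
by apply: polyfun_ext IHr => A; rewrite big_cons (negbTE nPx).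
Qed.

Lemma polyfun_prod (I : Type) (r : seq I) (P : pred I) (F : I -> 'M[Cx]_m -> Cx) :
  (forall i, polyfun (F i)) -> polyfun (fun A => \prod_(i <- r | P i) F i A).
Proof.
move=> pfF; elim: r => [|x r IHr].
  by apply: polyfun_ext (pf_const _ 1) => A; rewrite big_nil.
have [Px|nPx] := boolP (P x).
  by apply: polyfun_ext (pf_mul (pfF x) IHr) => A; rewrite big_cons Px.
by apply: polyfun_ext IHr => A; rewrite big_cons (negbTE nPx).
Qed.

Lemma polyfun_det : polyfun (fun A => \det A).
Proof.
apply: polyfun_sum => s; apply: pf_mul; first exact: pf_const.
by apply: polyfun_prod => k; apply: pf_coord.
Qed.

Lemma polyfun_cofactor (i j : 'I_m) : polyfun (fun A => cofactor A i j).
Proof.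
apply: polyfun_ext; first by move=> A; rewrite expand_cofactor.
apply: polyfun_sum => s; apply: pf_mul; first exact: pf_const.
by apply: polyfun_prod => k; apply: pf_coord.
Qed.

Lemma polyfun_line f A B : polyfun f -> exists p : {poly Cx}, forall t, f (A + t *: B) = p.[t].
Proof.
elim=> {f} [c|i j|f g _ [p fE] _ [q gE]|f g _ [p fE] _ [q gE]].
- by exists c%:P => t; rewrite hornerC.
- by exists ((A i j)%:P + (B i j)%:P * 'X) => t; rewrite !mxE !hornerE mulrC.
- by exists (p + q) => t; rewrite hornerD fE gE.
- by exists (p * q) => t; rewrite hornerM fE gE.
Qed.

End PolyFun.

Section FlagTopology.
Variable m : nat.
Implicit Types (F Y : 'M[Cx]_m -> Prop) (g h : 'M[Cx]_m).

Definition line_closed (L : 'M[Cx]_m -> Prop) : Prop :=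
  forall h1 h2 t, L h1 -> L h2 -> L (h1 + t *: (h2 - h1)).

Lemma fl_closed_ext F Y : (forall g, F g <-> Y g) -> fl_closed F -> fl_closed Y.
Proof.
move=> FY [binvF [P [pfP FP]]]; split.
  by move=> g b gu bB; rewrite -!FY; apply: binvF.
by exists P; split => // g gu; rewrite -FY; apply: FP.
Qed.

Lemma fl_closed0 : fl_closed (fun _ : 'M[Cx]_m => False).
Proof.
split=> //; exists (eq (fun _ => 1)); split=> [f <-|g _]; first exact: pf_const.
by split=> // /(_ _ erefl) /eqP; rewrite oner_eq0.
Qed.

(* The union of two closed sets is cut out by the products of their equations. *)
Lemma fl_closedU F1 F2 : fl_closed F1 -> fl_closed F2 ->
  fl_closed (fun g => F1 g \/ F2 g).
Proof.
move=> [binv1 [P1 [pf1 F1P]]] [binv2 [P2 [pf2 F2P]]]; split.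
  by move=> g b gu bB; rewrite (binv1 g b gu bB) (binv2 g b gu bB).
exists (fun f => exists f1 f2, [/\ P1 f1, P2 f2 & f = fun g => f1 g * f2 g]).
split=> [f [f1 [f2 [/pf1 ? /pf2 ? ->]]]|g gu]; first exact: pf_mul.
rewrite (F1P g gu) (F2P g gu); split.
  move=> [F1g|F2g] _ [f1 [f2 [P1f1 P2f2 ->]]].
    by rewrite (F1g f1) ?mul0r.
  by rewrite (F2g f2) ?mulr0.
move=> vanish; apply: NNPP => /not_or_and [/not_all_ex_not [f1 nf1]
  /not_all_ex_not [f2 nf2]].
have [P1f1 f1g] := imply_to_and _ _ nf1; have [P2f2 f2g] := imply_to_and _ _ nf2.
have /eqP := vanish _ (ex_intro _ f1 (ex_intro _ f2 (And3 P1f1 P2f2 erefl))).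
by rewrite mulf_eq0 => /orP [] /eqP.
Qed.

Lemma fl_closed_bigU (I : eqType) (r : seq I) (F : I -> 'M[Cx]_m -> Prop) :
  (forall i, fl_closed (F i)) -> fl_closed (fun g => exists2 i, i \in r & F i g).
Proof.
move=> closedF; elim: r => [|x r IHr].
  by apply: fl_closed_ext fl_closed0 => g; split=> // [[]].
apply: fl_closed_ext (fl_closedU (closedF x) IHr) => g; split.
  by move=> [Fxg|[i ir Fig]]; [exists x; rewrite ?mem_head | exists i; rewrite ?inE ?ir ?orbT].
by move=> [y]; rewrite inE => /predU1P [->|yr Fyg]; [left | right; exists y].
Qed.

Lemma fl_irreducible_sub_bigU (I : eqType) (r : seq I) (F : I -> 'M[Cx]_m -> Prop) Y :
  (forall i, fl_closed (F i)) -> fl_irreducible Y ->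
  fl_sub Y (fun g => exists2 i, i \in r & F i g) -> exists2 i, i \in r & fl_sub Y (F i).
Proof.
move=> closedF [[g0 [g0u Yg0]] irrY]; elim: r => [|x r IHr] Ysub.
  by have [] := Ysub g0 g0u Yg0.
have [] := irrY _ _ (closedF x) (fl_closed_bigU r closedF).
- move=> g gu Yg; have [y] := Ysub g gu Yg.
  by rewrite inE => /predU1P [->|yr Fyg]; [left | right; exists y].
- by exists x; rewrite ?mem_head.
- by move=> /IHr [i ir Yi]; exists i; rewrite ?inE ?ir ?orbT.
Qed.

Lemma fl_subPn Y F : ~ fl_sub Y F -> exists g, [/\ g \in unitmx, Y g & ~ F g].
Proof.
move=> notsub; apply: NNPP => nex; apply: notsub => g gu Yg.
by apply: NNPP => nFg; apply: nex; exists g.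
Qed.

Lemma zclosed_separate F h : zclosed F -> h \in unitmx -> ~ F h ->
  exists f, [/\ polyfun f, forall g, g \in unitmx -> F g -> f g = 0 & f h != 0].
Proof.
move=> [P [pfP FP]] hu Fh; apply: NNPP => no_sep; apply/Fh/(FP h hu) => f Pf.
apply/eqP; apply: contraT => fh; case: no_sep; exists f; split=> //; first exact: pfP.
by move=> g gu /(FP g gu); apply.
Qed.

(* A polynomial vanishing at all t <> 0 vanishes at t = 0. *)
Lemma zclosed_line_limit F g B : zclosed F -> g \in unitmx ->
  (forall t, t != 0 -> g + t *: B \in unitmx /\ F (g + t *: B)) -> F g.
Proof.
move=> [P [pfP FP]] gu onF; apply/(FP g gu) => f Pf.
have [p fE] := polyfun_line g B (pfP f Pf).
suff p0 : p = 0 by rewrite -[g]addr0 -(scale0r B) fE p0 horner0.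
apply/eqP/contraT => /exists_nonroot [t t_neq0 /negP []].
have [gtu Fgt] := onF t t_neq0.
by rewrite /root -fE ((FP _ gtu).1 Fgt f Pf) eqxx.
Qed.

(* Affine sets are irreducible: restrict equations of F1, F2 and det to a line. *)
Lemma line_closed_sub_or L F1 F2 : line_closed L -> zclosed F1 -> zclosed F2 ->
  fl_sub L (fun g => F1 g \/ F2 g) -> fl_sub L F1 \/ fl_sub L F2.
Proof.
move=> lineL closed1 closed2 Lsub; apply: NNPP.
move=> /not_or_and [/fl_subPn [h1 [h1u Lh1 F1h1]] /fl_subPn [h2 [h2u Lh2 F2h2]]].
have [f1 [pf1 F1f1 f1h1]] := zclosed_separate closed1 h1u F1h1.
have [f2 [pf2 F2f2 f2h2]] := zclosed_separate closed2 h2u F2h2.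
set B := h2 - h1.
have [p1 p1E] := polyfun_line h1 B pf1.
have [p2 p2E] := polyfun_line h1 B pf2.
have [pd pdE] := polyfun_line h1 B (@polyfun_det m).
have at0 p (f : 'M[Cx]_m -> Cx) : (forall t, f (h1 + t *: B) = p.[t]) -> p.[0] = f h1.
  by move=> fE; rewrite -fE scale0r addr0.
have at1 p (f : 'M[Cx]_m -> Cx) : (forall t, f (h1 + t *: B) = p.[t]) -> p.[1] = f h2.
  by move=> fE; rewrite -fE scale1r addrC subrK.
have p1_neq0 : p1 != 0 by apply: contraNneq f1h1 => p10; rewrite -(at0 _ _ p1E) p10 horner0.
have p2_neq0 : p2 != 0 by apply: contraNneq f2h2 => p20; rewrite -(at1 _ _ p2E) p20 horner0.
have pd_neq0 : pd != 0.
  move: h1u; rewrite unitmxE unitfE; apply: contraNneq => pd0.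
  by rewrite -(at0 _ _ pdE) pd0 horner0.
have : p1 * p2 * pd != 0 by rewrite !mulf_neq0.
move=> /exists_nonroot [t _]; rewrite /root !hornerM !mulf_eq0 -p1E -p2E -pdE.
rewrite !negb_or => /andP [/andP [f1t f2t] dett].
have htu : h1 + t *: B \in unitmx by rewrite unitmxE unitfE.
have [/(F1f1 _ htu) f1t0|/(F2f2 _ htu) f2t0] := Lsub _ htu (lineL _ _ t Lh1 Lh2).
  by rewrite f1t0 eqxx in f1t.
by rewrite f2t0 eqxx in f2t.
Qed.

End FlagTopology.

Lemma exists_neq0_of_sum (V : nmodType) (I : finType) (P : pred I) (F : I -> V) :
  \sum_(i | P i) F i != 0 -> exists2 i, P i & F i != 0.
Proof.
move=> /eqP sum_neq0; apply: NNPP => noP; apply: sum_neq0; apply: big1 => i Pi.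
by apply/eqP; apply: contraT => Fi; case: noP; exists i.
Qed.

Section Boxes.
Variable m : nat.
Implicit Types (A : 'M[Cx]_m) (s t : 'I_m * 'I_m) (S : {set 'I_m * 'I_m}).

Definition ind (k : 'I_m) : 'I_m -> Cx := fun q => (q == k)%:R.

Lemma sum_mul_ind (w : 'I_m -> Cx) k : \sum_q w q * ind k q = w k.
Proof.
rewrite (bigD1 k) //= big1 ?addr0 => [|q /negbTE qk]; first by rewrite /ind eqxx mulr1.
by rewrite /ind qk mulr0.
Qed.

Lemma delta_mx_rank1 k l a b : (delta_mx k l : 'M[Cx]_m) a b = ind k a * ind l b.
Proof. by rewrite mxE /ind; case: (a == k); case: (b == l); rewrite ?mulr0 ?mulr1. Qed.

Lemma ind_neq0 k : exists q, ind k q != 0.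
Proof. by exists k; rewrite /ind eqxx oner_eq0. Qed.

Lemma Hij_sub s t : (s.1 <= t.1)%N -> (t.2 <= s.2)%N -> forall A, Hij s A -> Hij t A.
Proof.
move=> le1 le2 A As k l [lt1|lt2]; apply: As; first by left; apply: leq_ltn_trans lt1.
by right; apply: leq_trans lt2 le2.
Qed.

Lemma Hsum_of_Hij S s A : s \in S -> Hij s A -> Hsum S A.
Proof.
move=> sS As; exists (fun t => if t == s then A else 0); split.
  by move=> t _; case: eqP => [-> //|_] k l _; rewrite mxE.
by rewrite (bigD1 s) //= eqxx big1 ?addr0 // => t /andP [_ /negbTE ->].
Qed.

Lemma Hij_entry_neq0 s A k l : Hij s A -> A k l != 0 -> (k <= s.1)%N /\ (s.2 <= l)%N.
Proof.
move=> As Akl; apply/andP; rewrite leqNgt [(_ <= l)%N]leqNgt -negb_or.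
apply: contra Akl => /orP lt.
by apply/eqP/As; case: lt; [left|right].
Qed.

Lemma Hij_delta s k l : Hij s (delta_mx k l) <-> (k <= s.1)%N /\ (s.2 <= l)%N.
Proof.
split=> [Hkl|[le_k le_l] k' l' out].
  by apply: Hij_entry_neq0 Hkl _; rewrite mxE !eqxx oner_eq0.
rewrite mxE; apply/eqP; rewrite pnatr_eq0 eqb0 negb_and -!val_eqE /=.
case: out => [lt_k'|lt_l']; first by rewrite gtn_eqF ?(leq_ltn_trans le_k).
by rewrite orbC ltn_eqF ?(leq_trans lt_l').
Qed.

End Boxes.

Section RankOne.
Variable m : nat.
Variables (A : 'M[Cx]_m) (v w : 'I_m -> Cx).
Hypothesis AE : forall k l, A k l = v k * w l.
Hypotheses (v_neq0 : exists k, v k != 0) (w_neq0 : exists l, w l != 0).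

Lemma Hij_rank1 (s : 'I_m * 'I_m) : Hij s A <->
  (forall k : 'I_m, (s.1 < k)%N -> v k = 0) /\ (forall l : 'I_m, (l < s.2)%N -> w l = 0).
Proof.
have [k0 vk0] := v_neq0; have [l0 wl0] := w_neq0; split.
  move=> As; split=> [k|l] lt; apply/eqP.
    by have /eqP := As k l0 (or_introl lt); rewrite AE mulf_eq0 (negbTE wl0) orbF.
  by have /eqP := As k0 l (or_intror lt); rewrite AE mulf_eq0 (negbTE vk0).
by move=> [v0 w0] k l; rewrite AE => -[/v0|/w0] ->; rewrite ?mul0r ?mulr0.
Qed.

(* The entry of A at (last k with v k <> 0, first l with w l <> 0) is nonzero in some summand
   F s, and this forces A itself into H_s. *)
Lemma Hsum_rank1 (S : {set 'I_m * 'I_m}) : Hsum S A <-> exists2 s, s \in S & Hij s A.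
Proof.
split=> [[F [FS AF]]|[s sS As]]; last exact: Hsum_of_Hij sS As.
have [k1 vk1] := v_neq0; have [l1 wl1] := w_neq0.
have [k0 vk0 k0_max] := @arg_maxnP _ k1 (fun k => v k != 0) val vk1.
have [l0 wl0 l0_min] := @arg_minnP _ l1 (fun l => w l != 0) val wl1.
have : (\sum_(s in S) F s) k0 l0 != 0 by rewrite -AF AE mulf_neq0.
rewrite summxE => /exists_neq0_of_sum [s sS Fs_neq0].
have [le1 le2] := Hij_entry_neq0 (FS s sS) Fs_neq0.
exists s => //; apply/Hij_rank1; split=> [k|l] lt; apply/eqP; apply: contraTT lt => ?.
  by rewrite -leqNgt (leq_trans (k0_max k _)).
by rewrite -leqNgt (leq_trans le2 (l0_min l _)).
Qed.

End RankOne.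

Section FlagCoordinates.
Variable n : nat.
Local Notation N := n.+1.
Implicit Types (g : 'M[Cx]_N) (s : 'I_N * 'I_N).

Definition inv_col0 g (k : 'I_N) := invmx g k ord0.
Definition last_row g (l : 'I_N) := g ord_max l.

Lemma conj_E1nE g k l : (invmx g *m E1n n *m g) k l = inv_col0 g k * last_row g l.
Proof.
rewrite -mulmxA mxE (bigD1 ord0) //= big1 ?addr0 => [|q /negbTE q0].
  rewrite mxE (bigD1 ord_max) //= big1 ?addr0 => [|q /negbTE qn].
    by rewrite !mxE !eqxx mul1r.
  by rewrite !mxE qn andbF mul0r.
by rewrite mxE big1 ?mulr0 // => r _; rewrite !mxE q0 mul0r.
Qed.

Lemma inv_col0_neq0 g : g \in unitmx -> exists k, inv_col0 g k != 0.
Proof.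
move=> gu; have : (g *m invmx g) ord0 ord0 != 0 by rewrite mulmxV // mxE eqxx oner_eq0.
by rewrite mxE => /exists_neq0_of_sum [k _]; rewrite mulf_eq0 negb_or => /andP [_]; exists k.
Qed.

Lemma last_row_neq0 g : g \in unitmx -> exists l, last_row g l != 0.
Proof.
move=> gu; have : (g *m invmx g) ord_max ord_max != 0 by rewrite mulmxV // mxE eqxx oner_eq0.
by rewrite mxE => /exists_neq0_of_sum [l _]; rewrite mulf_eq0 negb_or => /andP [? _]; exists l.
Qed.

Lemma last_row_inv_col0_orth g : g \in unitmx -> (0 < n)%N ->
  \sum_q last_row g q * inv_col0 g q = 0.
Proof.
move=> gu n_gt0; have /matrixP /(_ ord_max ord0) := mulmxV gu.
by rewrite !mxE -val_eqE /= eqn0Ngt n_gt0.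
Qed.

Lemma XK_HijP g s : g \in unitmx -> XK (Hij s) g <->
  (forall k : 'I_N, (s.1 < k)%N -> inv_col0 g k = 0) /\
  (forall l : 'I_N, (l < s.2)%N -> last_row g l = 0).
Proof.
move=> gu; apply: Hij_rank1; [exact: conj_E1nE|exact: inv_col0_neq0|exact: last_row_neq0].
Qed.

Lemma XK_HsumP (S : {set 'I_N * 'I_N}) g : g \in unitmx ->
  XK (Hsum S) g <-> exists2 s, s \in S & XK (Hij s) g.
Proof.
move=> gu; apply: Hsum_rank1; [exact: conj_E1nE|exact: inv_col0_neq0|exact: last_row_neq0].
Qed.

Lemma XK_Hij1 s : XK (Hij s) 1%:M.
Proof.
apply/(XK_HijP _ (unitmx1 _ _)); split=> [k|l] lt; rewrite /inv_col0 /last_row ?invmx1 mxE.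
  by rewrite -val_eqE /= gtn_eqF // (leq_ltn_trans _ lt).
by rewrite -val_eqE /= gtn_eqF // (leq_trans lt (leq_ord _)).
Qed.

End FlagCoordinates.

Section BorelAction.
Variable m : nat.
Implicit Types (A b : 'M[Cx]_m).

Lemma invmx_mul A b : A \in unitmx -> b \in unitmx -> invmx (A *m b) = invmx b *m invmx A.
Proof.
move=> Au bu; have Abu : A *m b \in unitmx by rewrite unitmx_mul Au bu.
have AbV : (A *m b) *m (invmx b *m invmx A) = 1%:M.
  by rewrite -mulmxA (mulmxA b) mulmxV // mul1mx mulmxV.
by rewrite -[invmx _]mulmx1 -AbV mulmxA mulVmx // mul1mx.
Qed.

Lemma Bmat_diag_neq0 b : Bmat b -> forall l, b l l != 0.
Proof.
move=> [bu b_upper] l; move: bu; rewrite unitmxE unitfE -det_tr det_trig.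
  by rewrite (bigD1 l) //= mxE mulf_eq0 negb_or => /andP [].
by apply/is_trig_mxP => i j lt; rewrite mxE b_upper.
Qed.

Lemma Bmat_inv b : Bmat b -> Bmat (invmx b).
Proof.
move=> Bb; have bu := Bb.1; split; first by rewrite unitmx_inv.
move=> k l; have [p] := ubnP l; elim: p l => // p IHp l /ltnSE le_lp lt_lk.
have /matrixP /(_ k l) := mulVmx bu; rewrite !mxE -val_eqE /= gtn_eqF //.
rewrite (bigD1 l) //= big1 ?addr0 => [/eqP|q /negbTE ql].
  by rewrite mulf_eq0 (negbTE (Bmat_diag_neq0 Bb l)) orbF => /eqP.
have [lt_ql|lt_lq|/val_inj qE] := ltngtP q l; last by rewrite qE eqxx in ql.
  by rewrite (IHp q (leq_trans lt_ql le_lp) (ltn_trans lt_ql lt_lk)) mul0r.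
by rewrite Bb.2 ?mulr0.
Qed.

End BorelAction.

Section SchubertCells.
Variable n : nat.
Local Notation N := n.+1.
Implicit Types (g b : 'M[Cx]_N) (s : 'I_N * 'I_N).

Lemma XK_Hij_mulB g b s : g \in unitmx -> Bmat b -> XK (Hij s) g -> XK (Hij s) (g *m b).
Proof.
move=> gu Bb; have gbu : g *m b \in unitmx by rewrite unitmx_mul gu Bb.1.
rewrite (XK_HijP _ gu) (XK_HijP _ gbu) => -[v0 w0]; split=> [k lt_k|l lt_l].
  rewrite /inv_col0 invmx_mul ?Bb.1 // mxE big1 // => q _.
  have [lt_q|le_q] := ltnP s.1 q; first by rewrite -/(inv_col0 g q) v0 ?mulr0.
  by rewrite (Bmat_inv Bb).2 ?mul0r // (leq_ltn_trans le_q lt_k).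
rewrite /last_row mxE big1 // => q _.
have [lt_q|le_q] := ltnP q s.2; first by rewrite -/(last_row g q) w0 ?mul0r.
by rewrite Bb.2 ?mulr0 // (leq_trans lt_l le_q).
Qed.

Lemma binv_XK_Hij s : binv (XK (Hij s)).
Proof.
move=> g b gu Bb; split; last exact: XK_Hij_mulB.
have gbu : g *m b \in unitmx by rewrite unitmx_mul gu Bb.1.
by move=> /(XK_Hij_mulB gbu (Bmat_inv Bb)); rewrite mulmxK // Bb.1.
Qed.

(* By Cramer's rule, inv_col0 g k is cofactor g 0 k up to the unit factor (det g)^-1. *)
Lemma zclosed_XK_Hij s : zclosed (XK (Hij s)).
Proof.
exists (fun f => exists k l : 'I_N, ((s.1 < k)%N \/ (l < s.2)%N) /\
          f = fun g => cofactor g ord0 k * g ord_max l); split.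
  by move=> f [k [l [_ ->]]]; apply: pf_mul; [exact: polyfun_cofactor|exact: pf_coord].
move=> g gu; have det_neq0 : (\det g)^-1 != 0 by rewrite invr_eq0 -unitfE -unitmxE.
have entryE k l : (invmx g *m E1n n *m g) k l =
    (\det g)^-1 * (cofactor g ord0 k * g ord_max l).
  by rewrite conj_E1nE /inv_col0 /last_row /invmx gu !mxE -mulrA.
split=> [Xg f [k [l [kl ->]]]|eqs k l kl].
  by have /eqP := Xg k l kl; rewrite entryE mulf_eq0 (negbTE det_neq0) => /eqP.
by rewrite entryE (eqs (fun g => cofactor g ord0 k * g ord_max l)) ?mulr0 //; exists k, l.
Qed.

Lemma fl_closed_XK_Hij s : fl_closed (XK (Hij s)).
Proof. by split; [exact: binv_XK_Hij|exact: zclosed_XK_Hij]. Qed.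

End SchubertCells.

Section Shears.
Variable n : nat.
Local Notation N := n.+1.
Implicit Types (g : 'M[Cx]_N) (y w : 'I_N -> Cx) (m : 'I_N) (t : Cx).

Definition col_at y m : 'M[Cx]_N := \matrix_(k, l) (y k * (l == m)%:R).

Definition shear y m t : 'M[Cx]_N := 1%:M - t *: col_at y m.

Lemma col_at_sqr y m : y m = 0 -> col_at y m *m col_at y m = 0.
Proof.
move=> ym0; apply/matrixP => k l; rewrite !mxE (bigD1 m) //= big1 ?addr0.
  by rewrite !mxE ym0 mul0r mulr0.
by move=> q /negbTE qm; rewrite !mxE qm mulr0 mul0r.
Qed.

Lemma shearK y m t : y m = 0 -> shear y m t *m shear y m (- t) = 1%:M.
Proof.
move=> ym0; rewrite /shear mulmxBl mul1mx mulmxBr mulmx1 -scalemxAl -scalemxAr.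
by rewrite col_at_sqr // !scaler0 subr0 scaleNr opprK addrK.
Qed.

Lemma unitmx_mul_shear g y m t : g \in unitmx -> y m = 0 -> g *m shear y m t \in unitmx.
Proof. by move=> gu ym0; rewrite unitmx_mul gu (mulmx1_unit (shearK t ym0)).1. Qed.

Lemma inv_col0_mul_shear g y m t k : g \in unitmx -> y m = 0 ->
  inv_col0 (g *m shear y m t) k = inv_col0 g k + t * y k * inv_col0 g m.
Proof.
move=> gu ym0; have [su _] := mulmx1_unit (shearK t ym0).
have shearV : invmx (shear y m t) = shear y m (- t).
  by rewrite -[invmx _]mulmx1 -(shearK t ym0) mulmxA mulVmx // mul1mx.
rewrite /inv_col0 invmx_mul // shearV /shear mulmxBl mul1mx -scalemxAl !mxE mulNr opprK.
rewrite (bigD1 m) //= big1 ?addr0 => [|q /negbTE qm]; last by rewrite !mxE qm mulr0 mul0r.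
by rewrite !mxE eqxx mulr1 mulrA.
Qed.

Lemma last_row_mul_shear g y m t l :
  last_row (g *m shear y m t) l =
  last_row g l - t * (\sum_q last_row g q * y q) * (l == m)%:R.
Proof.
rewrite /last_row /shear mulmxBr mulmx1 -scalemxAr !mxE -mulrA big_distrl /=.
by congr (_ - _ * _); apply: eq_bigr => q _; rewrite !mxE mulrA.
Qed.

Lemma mul_shearE g y m t : g *m shear y m t = g + t *: - (g *m col_at y m).
Proof. by rewrite /shear mulmxBr mulmx1 -scalemxAr scalerN. Qed.

Lemma XK_Hij_mul_shear (s : 'I_N * 'I_N) g y m t : g \in unitmx -> y m = 0 ->
  (forall k : 'I_N, (s.1 < k)%N -> y k = 0) ->
  (s.2 <= m)%N \/ \sum_q last_row g q * y q = 0 ->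
  XK (Hij s) g -> XK (Hij s) (g *m shear y m t).
Proof.
move=> gu ym0 y0 m_ok; rewrite (XK_HijP _ gu) (XK_HijP _ (unitmx_mul_shear t gu ym0)).
move=> [v0 w0]; split=> [k lt_k|l lt_l].
  by rewrite inv_col0_mul_shear // v0 // y0 // mulr0 mul0r addr0.
rewrite last_row_mul_shear w0 // sub0r; have [lm|_] := eqVneq l m; last by rewrite mulr0 oppr0.
case: m_ok => [le_m|->]; last by rewrite mulr0 mul0r oppr0.
by move: lt_l; rewrite lm ltnNge le_m.
Qed.

Lemma zclosed_shear_limit (F : 'M[Cx]_N -> Prop) g y m : zclosed F -> g \in unitmx ->
  y m = 0 -> (forall t, t != 0 -> F (g *m shear y m t)) -> F g.
Proof.
move=> closedF gu ym0 Fshear.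
apply: (zclosed_line_limit (B := - (g *m col_at y m)) closedF gu) => t t_neq0.
by rewrite -mul_shearE unitmx_mul_shear //; split=> //; apply: Fshear.
Qed.

Lemma exists_orth_pair w (a b : 'I_N) : a != b -> exists y, exists2 c,
  (c == a) || (c == b) & [/\ y c != 0, \sum_q w q * y q = 0 &
                            forall k, k != a -> k != b -> y k = 0].
Proof.
move=> ab; have [wa0|wa_neq0] := eqVneq (w a) 0.
  exists (ind a), a; rewrite ?eqxx //; split; first by rewrite /ind eqxx oner_eq0.
    by rewrite sum_mul_ind.
  by move=> k /negbTE ka _; rewrite /ind ka.
exists (fun q => w b * ind a q - w a * ind b q), b; rewrite ?eqxx ?orbT //; split.
- by rewrite /ind eqxx [b == a]eq_sym (negbTE ab) mulr0 sub0r mulr1 oppr_eq0.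
- under eq_bigr do rewrite mulrBr !mulrA.
  rewrite sumrB (sum_mul_ind (fun q => w q * w b)) (sum_mul_ind (fun q => w q * w a)).
  by rewrite mulrC subrr.
- by move=> k /negbTE ka /negbTE kb; rewrite /ind ka kb !mulr0 subr0.
Qed.

End Shears.

Section SchubertIrreducible.
Variable n : nat.
Local Notation N := n.+1.
Variables i j : 'I_N.
Hypothesis i_neq_j : i != j.
Local Notation X := (XK (Hij (i, j))).
Implicit Types (g h : 'M[Cx]_N).

Lemma ord_max_neq0 : (ord_max : 'I_N) != ord0.
Proof.
rewrite -val_eqE /=; apply/eqP => n0; move: i j i_neq_j; rewrite n0 => a b.
by rewrite !ord1 eqxx.
Qed.

(* An affine-linear part of X whose B-translates are dense in X. *)
Definition slice h : Prop :=
  (forall k : 'I_N, k != ord0 -> h k i = 0) /\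
  (forall l : 'I_N, (l < j)%N -> last_row h l = 0).

Lemma slice_line_closed : line_closed slice.
Proof.
move=> h1 h2 t [col1 row1] [col2 row2]; split=> [k k0|l lt_l].
  by rewrite !mxE col1 // col2 // subrr mulr0 addr0.
by rewrite /last_row !mxE -!/(last_row _ _) row1 // row2 // subrr mulr0 addr0.
Qed.

(* Column i of h is h 0 i times e_0, so h^-1 e_0 is a multiple of e_i. *)
Lemma XK_Hij_slice h : h \in unitmx -> slice h -> X h.
Proof.
move=> hu [col0 row0]; apply/(XK_HijP _ hu); split=> // k lt_k.
have inv_colE q : inv_col0 h q * h ord0 i = (q == i)%:R.
  have /matrixP /(_ q i) := mulVmx hu; rewrite !mxE => <-.
  by rewrite (bigD1 ord0) //= big1 ?addr0 // => r r0; rewrite col0 ?mulr0.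
have /eqP := inv_colE k; rewrite -val_eqE /= gtn_eqF // mulf_eq0 => /orP [/eqP //|/eqP hi0].
by have /eqP := inv_colE i; rewrite hi0 mulr0 eqxx eq_sym oner_eq0.
Qed.

(* b replaces column i of the identity by v = g^-1 e_0, so that g b e_i = e_0. *)
Lemma slice_mulB g : g \in unitmx -> X g -> inv_col0 g i != 0 ->
  exists2 b, Bmat b & slice (g *m b).
Proof.
move=> gu /(XK_HijP _ gu) [v0 w0] vi_neq0.
pose b : 'M[Cx]_N := \matrix_(k, l) if l == i then inv_col0 g k else (k == l)%:R.
have b_upper (k l : 'I_N) : (l < k)%N -> b k l = 0.
  move=> lt_lk; rewrite mxE; case: eqP => [li|_]; first by apply: v0; rewrite /= -li.
  by rewrite -val_eqE /= gtn_eqF.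
have bu : b \in unitmx.
  rewrite unitmxE unitfE -det_tr det_trig; last first.
    by apply/is_trig_mxP => k l lt_kl; rewrite mxE b_upper.
  rewrite (bigD1 i) //= big1 ?mulr1 => [|q /negbTE qi]; first by rewrite !mxE eqxx.
  by rewrite !mxE qi eqxx.
exists b => //; split=> [k k0|l lt_l].
  have /matrixP /(_ k ord0) := mulmxV gu; rewrite !mxE (negbTE k0) => /esym/eqP.
  by rewrite (eq_bigr (fun q => g k q * b q i)) => [/eqP|q _]; rewrite ?mxE ?eqxx.
rewrite /last_row mxE; have [->|li] := eqVneq l i.
  have /matrixP /(_ ord_max ord0) := mulmxV gu.
  rewrite !mxE (negbTE ord_max_neq0) => /esym/eqP.
  by rewrite (eq_bigr (fun q => g ord_max q * b q i)) => [/eqP|q _]; rewrite ?mxE ?eqxx.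
rewrite (bigD1 l) //= big1 ?addr0 => [|q /negbTE ql]; last by rewrite mxE (negbTE li) ql mulr0.
by rewrite mxE (negbTE li) eqxx mulr1; apply: w0.
Qed.

Section ClosedOverSlice.
Variable F : 'M[Cx]_N -> Prop.
Hypothesis closedF : fl_closed F.
Hypothesis sliceF : fl_sub slice F.

Lemma closed_over_slice_open g : g \in unitmx -> X g -> inv_col0 g i != 0 -> F g.
Proof.
move=> gu Xg /(slice_mulB gu Xg) [b Bb sl_gb].
have gbu : g *m b \in unitmx by rewrite unitmx_mul gu Bb.1.
by apply/(closedF.1 g b gu Bb); apply: sliceF.
Qed.

(* g (1 - t e_i e_m^T) stays in X and has v_i = t v_m <> 0; let t tend to 0. *)
Lemma closed_over_slice_shear g m : g \in unitmx -> X g -> inv_col0 g m != 0 ->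
  (j <= m)%N \/ last_row g i = 0 -> F g.
Proof.
move=> gu Xg vm_neq0 m_ok; have [vi0|] := eqVneq (inv_col0 g i) 0; last first.
  exact: closed_over_slice_open.
have mi : m != i by apply: contraNneq vm_neq0 => ->; rewrite vi0.
have ind_m0 : ind i m = 0 by rewrite /ind (negbTE mi).
apply: (zclosed_shear_limit closedF.2 gu ind_m0) => t t_neq0.
have gtu := unitmx_mul_shear t gu ind_m0.
apply: closed_over_slice_open => //.
  apply: XK_Hij_mul_shear => //= [k lt_ik|]; last by rewrite sum_mul_ind.
  by rewrite /ind -val_eqE /= gtn_eqF.
by rewrite inv_col0_mul_shear // vi0 add0r /ind eqxx mulr1 mulf_neq0.
Qed.

(* A first shear along y creates an entry v_c <> 0 with j <= c. *)
Lemma closed_over_slice_shear2 g m y c : g \in unitmx -> X g ->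
  inv_col0 g m != 0 -> y m = 0 -> (forall k : 'I_N, (i < k)%N -> y k = 0) ->
  \sum_q last_row g q * y q = 0 -> y c != 0 -> inv_col0 g c = 0 -> (j <= c)%N -> F g.
Proof.
move=> gu Xg vm_neq0 ym0 y0 orth yc_neq0 vc0 le_jc.
apply: (zclosed_shear_limit closedF.2 gu ym0) => t t_neq0.
have gtu := unitmx_mul_shear t gu ym0.
apply: (closed_over_slice_shear (m := c)) => //; last by left.
  by apply: XK_Hij_mul_shear => //; right.
by rewrite inv_col0_mul_shear // vc0 add0r !mulf_neq0.
Qed.

(* closed_over_slice_shear covers every case but j < i with v vanishing from j on; there a y in
   span(e_j, e_{j+1}) orthogonal to w feeds closed_over_slice_shear2. *)
Lemma XK_Hij_sub_closed_over_slice : fl_sub X F.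
Proof.
move=> g gu Xg; have [m0 vm0_neq0] := inv_col0_neq0 gu.
have [v0 w0] := (XK_HijP _ gu).1 Xg.
have [lt_ij|lt_ji|/val_inj ij] := ltngtP i j; last by move: i_neq_j; rewrite ij eqxx.
  by apply: (closed_over_slice_shear (m := m0)) => //; right; apply: w0.
have [[m [le_jm vm_neq0]]|no_m] := classic (exists m : 'I_N, (j <= m)%N /\ inv_col0 g m != 0).
  by apply: (closed_over_slice_shear (m := m)) => //; left.
have v0_ge_j (k : 'I_N) : (j <= k)%N -> inv_col0 g k = 0.
  by move=> le_jk; apply/eqP; apply: contraT => vk; case: no_m; exists k.
have lt_m0j : (m0 < j)%N by rewrite ltnNge; apply: contra vm0_neq0 => /v0_ge_j ->.
have lt_j1 : (j.+1 < N)%N by apply: leq_ltn_trans lt_ji (ltn_ord i).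
pose j1 : 'I_N := Ordinal lt_j1.
have [|y [c jc [yc_neq0 orth y0]]] := exists_orth_pair (last_row g) (a := j) (b := j1).
  by rewrite -val_eqE /= ltn_eqF.
have le_jc : (j <= c)%N by case/orP: jc => /eqP ->.
apply: (closed_over_slice_shear2 (m := m0) (y := y) (c := c)) => //.
- by apply: y0; rewrite -val_eqE /= ltn_eqF // ltnW.
- move=> k lt_ik; apply: y0; rewrite -val_eqE /= gtn_eqF //.
    exact: ltn_trans lt_ji lt_ik.
  exact: leq_ltn_trans lt_ji lt_ik.
- exact: v0_ge_j.
Qed.

End ClosedOverSlice.

Lemma fl_irreducible_XK_Hij : fl_irreducible X.
Proof.
split; first by exists 1%:M; split; [exact: unitmx1|exact: XK_Hij1].
move=> F1 F2 closed1 closed2 Xsub.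
have sliceX : fl_sub slice (fun g => F1 g \/ F2 g).
  by move=> h hu sl_h; apply: Xsub hu (XK_Hij_slice hu sl_h).
have [sub1|sub2] := line_closed_sub_or slice_line_closed closed1.2 closed2.2 sliceX.
  by left; apply: XK_Hij_sub_closed_over_slice.
by right; apply: XK_Hij_sub_closed_over_slice.
Qed.

End SchubertIrreducible.

Section HessenbergCorner.
Variables (m : nat) (H : 'M[Cx]_m -> Prop) (a b : 'I_m).
Hypothesis hessH : is_hess H.
Hypothesis H_ab : H (delta_mx a b).
Hypothesis below_ab : forall k : 'I_m, (a < k)%N -> ~ H (delta_mx k b).
Hypothesis left_ab : forall l : 'I_m, (l < b)%N -> ~ H (delta_mx a l).

Lemma hess_deltaP (h : 'I_m -> nat) :
  (forall A, H A <-> forall k l : 'I_m, (h l <= k)%N -> A k l = 0) ->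
  forall k l, H (delta_mx k l) <-> (k < h l)%N.
Proof.
move=> HE k l; rewrite HE; split=> [delta0|lt_k k' l' le_k'].
  by rewrite ltnNge; apply/negP => /delta0 /eqP; rewrite mxE !eqxx oner_eq0.
rewrite mxE; case: eqP => [kk'|] //=; case: eqP => [ll'|] //=.
by move: le_k'; rewrite kk' ll' leqNgt lt_k.
Qed.

(* Lower the Hessenberg function at column b from a.+1 to a. *)
Lemma is_hess_drop_corner : is_hess (fun A => H A /\ A a b = 0).
Proof.
have [h [h_mono h_le HE]] := hessH; have deltaP := hess_deltaP HE.
have lt_ahb : (a < h b)%N by apply/deltaP.
have hbE : h b = a.+1.
  apply/eqP; rewrite eqn_leq lt_ahb andbT leqNgt; apply/negP => lt_a1.
  have lt_a1m : (a.+1 < m)%N by apply: leq_trans lt_a1 (h_le b).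
  by apply: (below_ab (k := Ordinal lt_a1m)) => //; apply/deltaP.
have h_left (l : 'I_m) : (l < b)%N -> (h l <= a)%N.
  by move=> lt_lb; rewrite leqNgt; apply/negP => /deltaP; apply: left_ab.
exists (fun l => if l == b then a : nat else h l); split.
- move=> l l' le_ll'; have [lb|lb] := eqVneq l b; have [l'b|l'b] := eqVneq l' b => //.
  + by apply: ltnW (leq_trans lt_ahb (h_mono _ _ _)); rewrite -lb.
  + by apply: h_left; rewrite ltn_neqAle val_eqE lb -l'b le_ll'.
  + exact: h_mono.
- by move=> l; case: eqP => _; [exact: ltnW (ltn_ord a)|exact: h_le].
move=> A; split=> [[HA Aab0] k l|A0].
  have := (HE A).1 HA k l; case: eqVneq => [->|_ //] Ak le_ak.
  have [->//|ak] := eqVneq k a; apply: Ak; rewrite hbE ltn_neqAle le_ak andbT.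
  by rewrite eq_sym -val_eqE in ak.
split; last by apply: A0; rewrite eqxx.
apply/HE => k l le_k; apply: A0; case: eqP => [lb|_ //].
by apply: leq_trans le_k; rewrite lb hbE.
Qed.

End HessenbergCorner.

Lemma minimal_hess_corner n (H : 'M[Cx]_n.+1 -> Prop) (a b : 'I_n.+1) :
  minimal_hess H -> H (delta_mx a b) ->
  (forall k : 'I_n.+1, (a < k)%N -> ~ H (delta_mx k b)) ->
  (forall l : 'I_n.+1, (l < b)%N -> ~ H (delta_mx a l)) ->
  exists2 g, g \in unitmx & XK H g /\ inv_col0 g a * last_row g b != 0.
Proof.
move=> [hessH minH] H_ab below_ab left_ab; apply: NNPP => corner0.
apply: (minH _ (is_hess_drop_corner hessH H_ab below_ab left_ab)).
  split=> [A []//|]; exists (delta_mx a b); split=> // -[_ /eqP].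
  by rewrite mxE !eqxx oner_eq0.
split=> [g _ []//|g gu XHg]; split=> //; rewrite conj_E1nE; apply/eqP.
by apply: contraT => corner_neq0; case: corner0; exists g.
Qed.

Lemma Bmat_size1 (g : 'M[Cx]_1) : Bmat g <-> g \in unitmx.
Proof. by split=> [[]//|gu]; split=> // k l; rewrite !ord1. Qed.

Lemma fl_irreducible_size1 (Y : 'M[Cx]_1 -> Prop) : Y 1%:M -> fl_irreducible Y.
Proof.
move=> Y1; have u1 := unitmx1 Cx 1; split=> [|F1 F2 closed1 closed2 Ysub]; first by exists 1%:M.
have F_all (F : 'M[Cx]_1 -> Prop) : fl_closed F -> F 1%:M -> fl_sub Y F.
  move=> closedF F_1 g gu _; have /Bmat_size1 Bg := gu.
  by have := (closedF.1 _ _ u1 Bg).2 F_1; rewrite mul1mx.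
by have [/F_all|/F_all] := Ysub _ u1 Y1; [left|right]; auto.
Qed.

Section MinimalDecomposition.
Variable n : nat.
Local Notation N := n.+1.
Variables (H : 'M[Cx]_N -> Prop) (S : {set 'I_N * 'I_N}).
Hypotheses (minH : minimal_hess H) (decH : max_decomposition H S).
Implicit Types (s t : 'I_N * 'I_N) (g : 'M[Cx]_N).

Lemma Hij_sub_H s : s \in S -> forall A, Hij s A -> H A.
Proof. by move=> sS A As; apply/decH.1; apply: Hsum_of_Hij sS As. Qed.

Lemma XK_Hij_sub_XK_H s : s \in S -> fl_sub (XK (Hij s)) (XK H).
Proof. by move=> sS g _; apply: Hij_sub_H. Qed.

Lemma XK_HP g : g \in unitmx -> XK H g <-> exists2 s, s \in S & XK (Hij s) g.
Proof. by move=> gu; rewrite /XK decH.1; apply: XK_HsumP. Qed.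

Lemma corner_outside s t : s \in S -> t \in S -> s != t -> (t.1 < s.1)%N \/ (s.2 < t.2)%N.
Proof.
move=> sS tS st; have [lt1|le1] := ltnP t.1 s.1; first by left.
have [lt2|le2] := ltnP s.2 t.2; first by right.
by case: (decH.2 s t sS tS st); apply: Hij_sub.
Qed.

Lemma H_deltaP k l : H (delta_mx k l) <-> exists2 t, t \in S & (k <= t.1)%N /\ (t.2 <= l)%N.
Proof.
rewrite decH.1 (Hsum_rank1 (@delta_mx_rank1 _ k l) (ind_neq0 k) (ind_neq0 l)).
by split=> -[t tS /Hij_delta tkl]; exists t.
Qed.

Lemma corner_of_S s : s \in S -> [/\ H (delta_mx s.1 s.2),
  forall k : 'I_N, (s.1 < k)%N -> ~ H (delta_mx k s.2) &
  forall l : 'I_N, (l < s.2)%N -> ~ H (delta_mx s.1 l)].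
Proof.
move=> sS; split; first by apply: (Hij_sub_H sS); apply/Hij_delta.
  move=> k lt_k /H_deltaP [t tS [le_kt le_ts]].
  have st : s != t by apply: contraTneq lt_k => ->; rewrite -leqNgt.
  have [|] := corner_outside sS tS st; rewrite ltnNge.
    by rewrite (leq_trans (ltnW lt_k) le_kt).
  by rewrite le_ts.
move=> l lt_l /H_deltaP [t tS [le_st le_tl]].
have st : s != t by apply: contraTneq lt_l => ->; rewrite -leqNgt.
have [|] := corner_outside sS tS st; rewrite ltnNge ?le_st //.
by rewrite (leq_trans le_tl (ltnW lt_l)).
Qed.

(* Minimality yields such a g in X_H, and the corner of s lies outside every other box of S. *)
Lemma XK_Hij_corner_neq0 s : s \in S ->
  exists2 g, g \in unitmx & XK (Hij s) g /\ inv_col0 g s.1 * last_row g s.2 != 0.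
Proof.
move=> sS; have [H_s below left] := corner_of_S sS.
have [g gu [/(XK_HP gu) [t tS Xtg] corner_neq0]] := minimal_hess_corner minH H_s below left.
exists g => //; have [st|st] := eqVneq s t; first by split=> //; rewrite st.
have [v0 w0] := (XK_HijP _ gu).1 Xtg.
have [/v0|/w0] := corner_outside sS tS st => corner0;
  by move: corner_neq0; rewrite corner0 ?mul0r ?mulr0 eqxx.
Qed.

Lemma XK_Hij_not_sub s t : s \in S -> t \in S -> s != t -> ~ fl_sub (XK (Hij s)) (XK (Hij t)).
Proof.
move=> sS tS st Xsub; have [g gu [Xsg corner_neq0]] := XK_Hij_corner_neq0 sS.
have [v0 w0] := (XK_HijP _ gu).1 (Xsub g gu Xsg).
have [/v0|/w0] := corner_outside sS tS st => corner0;
  by move: corner_neq0; rewrite corner0 ?mul0r ?mulr0 eqxx.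
Qed.

(* On X_{H_ii} the relation w v = 0 reduces to w_i v_i = 0, killing the corner. *)
Lemma S_off_diagonal s : s \in S -> (0 < n)%N -> s.1 != s.2.
Proof.
move=> sS n_gt0; apply/eqP => s12; have [g gu [Xg corner_neq0]] := XK_Hij_corner_neq0 sS.
have [v0 w0] := (XK_HijP _ gu).1 Xg.
have := last_row_inv_col0_orth gu n_gt0; rewrite (bigD1 s.1) //= big1 ?addr0.
  by rewrite mulrC s12 => corner0; rewrite s12 corner0 eqxx in corner_neq0.
move=> q qs; have [lt_q|lt_q|/val_inj qE] := ltngtP q s.1; last by rewrite qE eqxx in qs.
  by rewrite w0 ?mul0r // -s12.
by rewrite v0 ?mulr0.
Qed.

Lemma fl_irreducible_XK_Hij_S s : s \in S -> fl_irreducible (XK (Hij s)).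
Proof.
move=> sS; have [s12|] := eqVneq s.1 s.2; last first.
  by case: s {sS} => i j; exact: fl_irreducible_XK_Hij.
have [n0|n_gt0] := posnP n; last by move: (S_off_diagonal sS n_gt0); rewrite s12 eqxx.
by move: s {sS} s12; rewrite n0 => s _; apply/fl_irreducible_size1/XK_Hij1.
Qed.

Lemma fl_irreducible_sub_XK_Hij Y : fl_irreducible Y -> fl_sub Y (XK H) ->
  exists2 s, s \in S & fl_sub Y (XK (Hij s)).
Proof.
move=> irrY YH; have [|s] := fl_irreducible_sub_bigU (r := enum S) (@fl_closed_XK_Hij n) irrY.
  by move=> g gu /(YH g gu) /(XK_HP gu) [s sS Xg]; exists s; rewrite ?mem_enum.
by rewrite mem_enum; exists s.
Qed.

End MinimalDecomposition.

Theorem mainTheorem8 (n : nat) (H : 'M[Cx]_n.+1 -> Prop)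
    (S : {set 'I_n.+1 * 'I_n.+1}) :
  minimal_hess H -> max_decomposition H S ->
  (forall Y, fl_irr_component (XK H) Y ->
     exists2 s, s \in S & fl_eq Y (XK (Hij s))) /\
  (forall s, s \in S -> fl_irr_component (XK H) (XK (Hij s))).
Proof.
move=> minH decH.
have component_data s : s \in S ->
    [/\ binv (XK (Hij s)), fl_sub (XK (Hij s)) (XK H) & fl_irreducible (XK (Hij s))].
  by move=> sS; split; [exact: binv_XK_Hij | exact: (XK_Hij_sub_XK_H decH sS) |
    exact: (fl_irreducible_XK_Hij_S minH decH sS)].
split=> [Y [_ YH irrY maxY] | s sS].
  have [s sS Ys] := fl_irreducible_sub_XK_Hij decH irrY YH.
  have [binv_s sub_s irr_s] := component_data s sS.
  by exists s => //; split=> //; apply: maxY.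
have [binv_s sub_s irr_s] := component_data s sS; split=> // Z _ sZ ZH irrZ.
have [t tS Zt] := fl_irreducible_sub_XK_Hij decH irrZ ZH.
have [->//|st] := eqVneq s t.
by case: (XK_Hij_not_sub minH decH sS tS st) => g gu /(sZ g gu) /(Zt g gu).
Qed.
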